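(* Let $M:\mathcal I\to\mathbb R^{(s+1)m\times(s+1)m}$ be continuous, viewed as an $(s+1)\times(s+1)$ block matrix of $m\times m$ blocks. The following are equivalent: (1) $M$ is smoothly 1-full and has constant rank $r_M$; (2) $M$ has constant rank $r_M$ and $M(t)$ is 1-full for every $t\in\mathcal I$; (3) there is a continuous $H:\mathcal I\to\mathbb R^{sm\times sm}$ with constant rank such that $\ker M(t)=\{(z,w)\in\mathbb R^m\times\mathbb R^{sm}: z=0,\ w\in\ker H(t)\}$ for all $t$; (4) $M$ has constant rank $r_M$ and $[I_m\ 0\cdots0]\ker M(t)=\{0\}$ for all $t\in\mathcal I$.
   Context: A matrix $M\in\mathbb R^{(s+1)m\times(s+1)m}$ is 1-full if there is a nonsingular matrix $T$ with $TM=\begin{bmatrix}I_m&0\\0&H\end{bmatrix}$. A continuous $M:\mathcal I\to\mathbb R^{(s+1)m\times(s+1)m}$ is smoothly 1-full if there is a continuous pointwise nonsingular $T$ with $TM=\begin{bmatrix}I_m&0\\0&H\end{bmatrix}$. *)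

From HB Require Import structures.
From mathcomp Require Import all_boot all_order all_algebra.
From mathcomp Require Import all_classical all_reals topology normedtype.
Set Implicit Arguments. Unset Strict Implicit. Unset Printing Implicit Defensive.
Import Order.TTheory GRing.Theory Num.Theory.
Import numFieldNormedType.Exports.
Local Open Scope ring_scope.
Local Open Scope classical_set_scope.

Definition mx_continuous_on (R : realType) (p q : nat) (I : interval R)
  (F : R -> 'M[R]_(p, q)) : Prop :=
  forall (i : 'I_p) (j : 'I_q), {within [set` I], continuous (fun t : R => F t i j)}.

Definition one_full (R : realType) (m s : nat) (M : 'M[R]_(m + s * m)) : Prop :=
  exists T : 'M[R]_(m + s * m), T \in unitmx /\
    exists H : 'M[R]_(s * m), T *m M = block_mx 1%:M 0 0 H.

Definition smoothly_one_full (R : realType) (m s : nat) (I : interval R)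
  (M : R -> 'M[R]_(m + s * m)) : Prop :=
  exists T : R -> 'M[R]_(m + s * m),
    mx_continuous_on I T /\ (forall t, t \in I -> T t \in unitmx) /\
    exists H : R -> 'M[R]_(s * m),
      forall t, t \in I -> T t *m M t = block_mx 1%:M 0 0 (H t).

Definition const_rank (R : realType) (p : nat) (I : interval R)
  (M : R -> 'M[R]_p) : Prop :=
  exists r : nat, forall t, t \in I -> \rank (M t) = r.


(* Only (4) => (1) requires a construction; the other implications are pointwise
   linear algebra, together with the identity rank M(t) = m + rank H(t) read off
   from the kernels in (3).  Condition (4) says that the rows of [I_m 0] lie in the
   row space of M(t).  Writing M = N^T Y with N, Y continuous of full row rank, the
   first m rows T1 of T solve T1 M = [I_m 0] continuously; the remaining rows are a
   continuous basis of the left kernel of M [I_m 0]^T, which makes T invertible and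
   T M block diagonal.  Everything thus rests on the existence of continuous row
   bases for continuous constant-rank matrix functions on an interval. *)

From HB Require Import structures.
From mathcomp Require Import all_boot all_order all_algebra.
From mathcomp Require Import all_classical all_reals topology normedtype.
From mathcomp Require Import lra zify.
Import Order.TTheory GRing.Theory Num.Theory.
Import numFieldNormedType.Exports.
Set Implicit Arguments. Unset Strict Implicit. Unset Printing Implicit Defensive.
Local Open Scope ring_scope.
Local Open Scope classical_set_scope.

Section WithinContinuity.
Variable R : realType.
Implicit Types (A B : set R) (f g : R -> R).

Lemma within_continuousD A f g : {within A, continuous f} ->
  {within A, continuous g} -> {within A, continuous (fun t => f t + g t)}.
Proof. by move=> hf hg x; apply: continuousD (hf x) (hg x). Qed.

Lemma within_continuousM A f g : {within A, continuous f} ->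
  {within A, continuous g} -> {within A, continuous (fun t => f t * g t)}.
Proof. by move=> hf hg x; apply: continuousM (hf x) (hg x). Qed.

Lemma within_continuousN A f :
  {within A, continuous f} -> {within A, continuous (fun t => - f t)}.
Proof. by move=> hf x; apply: continuousN (hf x). Qed.

Lemma within_continuous_cst A (c : R) : {within A, continuous (fun _ : R => c)}.
Proof. by move=> x; apply: cvg_cst. Qed.

Lemma within_continuousV A f : {within A, continuous f} ->
  (forall t, A t -> f t != 0) -> {within A, continuous (fun t => (f t)^-1)}.
Proof.
move=> hf f_neq0; apply/subspace_continuousP => x Ax.
exact: cvgV (f_neq0 x Ax) ((proj1 (subspace_continuousP _ _) hf) x Ax).
Qed.

Lemma eq_within_continuous A f g : (forall t, A t -> f t = g t) ->
  {within A, continuous f} -> {within A, continuous g}.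
Proof. by move=> efg; apply: subspace_eq_continuous => t; rewrite inE => /efg. Qed.

Lemma within_continuousW A B f : B `<=` A ->
  {within A, continuous f} -> {within B, continuous f}.
Proof. exact: continuous_subspaceW. Qed.

Lemma within_continuous_sum A (I : Type) (r : seq I) (P : pred I)
    (F : I -> R -> R) : (forall i, {within A, continuous F i}) ->
  {within A, continuous (fun t => \sum_(i <- r | P i) F i t)}.
Proof.
move=> hF; elim: r => [|i r IHr].
  by apply: (eq_within_continuous (f := fun _ => 0)) => [t _|];
    [rewrite big_nil | exact: within_continuous_cst].
apply: (eq_within_continuous
  (f := fun t => (if P i then F i t else 0) + \sum_(j <- r | P j) F j t)).
  by move=> t _; rewrite big_cons; case: (P i); rewrite ?add0r.
by apply: within_continuousD => //; case: (P i) => //; apply: within_continuous_cst.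
Qed.

Lemma within_continuous_prod A (I : Type) (r : seq I) (P : pred I)
    (F : I -> R -> R) : (forall i, {within A, continuous F i}) ->
  {within A, continuous (fun t => \prod_(i <- r | P i) F i t)}.
Proof.
move=> hF; elim: r => [|i r IHr].
  by apply: (eq_within_continuous (f := fun _ => 1)) => [t _|];
    [rewrite big_nil | exact: within_continuous_cst].
apply: (eq_within_continuous
  (f := fun t => (if P i then F i t else 1) * \prod_(j <- r | P j) F j t)).
  by move=> t _; rewrite big_cons; case: (P i); rewrite ?mul1r.
by apply: within_continuousM => //; case: (P i) => //; apply: within_continuous_cst.
Qed.

Lemma within_continuous_neq0 A f t0 : {within A, continuous f} -> A t0 ->
  f t0 != 0 -> exists2 d, 0 < d & forall t, A t -> `|t - t0| < d -> f t != 0.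
Proof.
move=> hf At0 ft0_neq0.
have f_near : nbhs (f t0) (ball (f t0) `|f t0|).
  by apply: nbhsx_ballx; rewrite normr_gt0.
have := (proj1 (subspace_continuousP _ _) hf) t0 At0 _ f_near.
rewrite /from_subspace => /nbhs_ballP [d d_gt0 hd].
exists d => // t At tt0; have /hd /(_ At) : ball t0 d t by rewrite /ball /= distrC.
by rewrite /ball /=; apply: contraTneq => ->; rewrite subr0 ltxx.
Qed.

Definition mxcontinuous A p q (F : R -> 'M[R]_(p, q)) :=
  forall i j, {within A, continuous (fun t => F t i j)}.

Lemma mxcontinuous_cst A p q (K : 'M[R]_(p, q)) : mxcontinuous A (fun _ => K).
Proof. by move=> i j; apply: within_continuous_cst. Qed.

Lemma mxcontinuousW A B p q (F : R -> 'M[R]_(p, q)) :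
  B `<=` A -> mxcontinuous A F -> mxcontinuous B F.
Proof. by move=> BA hF i j; apply: within_continuousW (hF i j). Qed.

Lemma eq_mxcontinuous A p q (F G : R -> 'M[R]_(p, q)) :
  (forall t, A t -> F t = G t) -> mxcontinuous A F -> mxcontinuous A G.
Proof. by move=> eFG hF i j; apply: eq_within_continuous (hF i j) => t /eFG ->. Qed.

Lemma mxcontinuous_mul A p q r (F : R -> 'M[R]_(p, q)) (G : R -> 'M[R]_(q, r)) :
  mxcontinuous A F -> mxcontinuous A G -> mxcontinuous A (fun t => F t *m G t).
Proof.
move=> hF hG i j; apply: (eq_within_continuous (f := fun t => \sum_k F t i k * G t k j)).
  by move=> t _; rewrite mxE.
by apply: within_continuous_sum => k; apply: within_continuousM.
Qed.

Lemma mxcontinuous_add A p q (F G : R -> 'M[R]_(p, q)) :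
  mxcontinuous A F -> mxcontinuous A G -> mxcontinuous A (fun t => F t + G t).
Proof.
move=> hF hG i j; apply: (eq_within_continuous (f := fun t => F t i j + G t i j)).
  by move=> t _; rewrite mxE.
exact: within_continuousD.
Qed.

Lemma mxcontinuous_opp A p q (F : R -> 'M[R]_(p, q)) :
  mxcontinuous A F -> mxcontinuous A (fun t => - F t).
Proof.
move=> hF i j; apply: (eq_within_continuous (f := fun t => - F t i j)).
  by move=> t _; rewrite mxE.
exact: within_continuousN.
Qed.

Lemma mxcontinuous_scale A p q (c : R -> R) (F : R -> 'M[R]_(p, q)) :
  {within A, continuous c} -> mxcontinuous A F -> mxcontinuous A (fun t => c t *: F t).
Proof.
move=> hc hF i j; apply: (eq_within_continuous (f := fun t => c t * F t i j)).
  by move=> t _; rewrite mxE.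
exact: within_continuousM.
Qed.

Lemma mxcontinuous_tr A p q (F : R -> 'M[R]_(p, q)) :
  mxcontinuous A F -> mxcontinuous A (fun t => (F t)^T).
Proof.
by move=> hF i j; apply: (eq_within_continuous (f := fun t => F t j i)) (hF j i) => t _;
  rewrite mxE.
Qed.

Lemma mxcontinuous_gram A p q (F : R -> 'M[R]_(p, q)) :
  mxcontinuous A F -> mxcontinuous A (fun t => F t *m (F t)^T).
Proof. by move=> hF; apply: mxcontinuous_mul => //; apply: mxcontinuous_tr. Qed.

Lemma mxcontinuous_col A p1 p2 q (F : R -> 'M[R]_(p1, q)) (G : R -> 'M[R]_(p2, q)) :
  mxcontinuous A F -> mxcontinuous A G -> mxcontinuous A (fun t => col_mx (F t) (G t)).
Proof.
move=> hF hG i j; case: (splitP i) => k ik.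
  have -> : i = lshift p2 k by apply: val_inj.
  by apply: (eq_within_continuous (f := fun t => F t k j)) => [t _|]; rewrite ?col_mxEu.
have -> : i = rshift p1 k by apply: val_inj.
by apply: (eq_within_continuous (f := fun t => G t k j)) => [t _|]; rewrite ?col_mxEd.
Qed.

Lemma mxcontinuous_drsub A p1 p2 q1 q2 (F : R -> 'M[R]_(p1 + p2, q1 + q2)) :
  mxcontinuous A F -> mxcontinuous A (fun t => drsubmx (F t)).
Proof.
move=> hF i j.
apply: (eq_within_continuous (f := fun t => F t (rshift p1 i) (rshift q1 j))) (hF _ _).
by move=> t _; rewrite !mxE.
Qed.

Lemma within_continuous_det A n (F : R -> 'M[R]_n) :
  mxcontinuous A F -> {within A, continuous (fun t => \det (F t))}.
Proof.
move=> hF; apply: within_continuous_sum => sigma.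
apply: within_continuousM; first exact: within_continuous_cst.
by apply: within_continuous_prod => i; apply: hF.
Qed.

Lemma mxcontinuous_adj A n (F : R -> 'M[R]_n) :
  mxcontinuous A F -> mxcontinuous A (fun t => \adj (F t)).
Proof.
move=> hF i j; apply: (eq_within_continuous (f := fun t => cofactor (F t) j i)).
  by move=> t _; rewrite mxE.
apply: within_continuousM; first exact: within_continuous_cst.
apply: within_continuous_det => k l.
apply: (eq_within_continuous (f := fun t => F t (lift j k) (lift i l))) (hF _ _).
by move=> t _; rewrite !mxE.
Qed.

Lemma mxcontinuous_inv A n (F : R -> 'M[R]_n) : mxcontinuous A F ->
  (forall t, A t -> F t \in unitmx) -> mxcontinuous A (fun t => invmx (F t)).
Proof.
move=> hF Funit.
apply: (eq_mxcontinuous (F := fun t => (\det (F t))^-1 *: \adj (F t))).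
  by move=> t /Funit Ftu; rewrite /invmx Ftu.
apply: mxcontinuous_scale; last exact: mxcontinuous_adj.
apply: within_continuousV; first exact: within_continuous_det.
by move=> t /Funit; rewrite unitmxE unitfE.
Qed.

End WithinContinuity.

Section Exhaustion.
Variable R : realType.
Implicit Types E : set R.

Lemma exists_above_or_near_sup E a n : E a -> exists z, E z /\
  (a + n%:R <= z \/ forall y, E y -> y - n.+1%:R^-1 < z).
Proof.
move=> Ea; have [[z [Ez an_le_z]]|no_above] := pselect (exists z, E z /\ a + n%:R <= z).
  by exists z; split=> //; left.
have E_ub : forall y, E y -> y <= a + n%:R.
  move=> y Ey; rewrite leNgt; apply/negP => lt_y.
  by apply: no_above; exists y; split=> //; apply: ltW.
have supE : has_sup E by split; [exists a | exists (a + n%:R)].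
have eps_gt0 : 0 < (n.+1%:R : R)^-1 by rewrite invr_gt0 ltr0n.
have [z Ez near_sup] := sup_adherent eps_gt0 supE.
exists z; split=> //; right => y Ey; apply: le_lt_trans near_sup.
by rewrite lerD2r; apply: sup_upper_bound.
Qed.

Lemma exhaust_right E a : E a -> exists r : nat -> R,
  [/\ forall n, E (r n), forall n, a <= r n, {homo r : i j / (i <= j)%N >-> i <= j} &
   forall t, E t -> exists n, exists2 d, 0 < d & forall y, E y -> y < t + d -> y <= r n].
Proof.
move=> Ea.
have [[u [Eu u_max]]|no_max] := pselect (exists u, E u /\ forall y, E y -> y <= u).
  exists (fun=> u); split=> //; first by move=> _; apply: u_max.
  by move=> t _; exists 0%N, 1 => // y Ey _; apply: u_max.
have [z z_spec] := choice (fun n => exists_above_or_near_sup n Ea).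
pose r := fix r n := if n is k.+1 then Num.max (r k) (z k.+1) else Num.max a (z 0%N).
have E_max x y : E x -> E y -> E (Num.max x y) by rewrite maxEle; case: ifP.
have z_le_r n : z n <= r n by case: n => [|n]; rewrite /= le_max lexx orbT.
have r_homo : {homo r : i j / (i <= j)%N >-> i <= j}.
  by apply: homo_leq => [//|x y w|n]; [apply: le_trans | rewrite /= le_max lexx].
exists r; split=> //.
- elim=> [|n IHn]; first by apply: E_max => //; case: (z_spec 0%N).
  by apply: E_max => //; case: (z_spec n.+1).
- by move=> n; apply: le_trans (r_homo 0%N n isT); rewrite /= le_max lexx.
move=> t Et.
have [y0 Ey0 t_lt_y0] : exists2 y0, E y0 & t < y0.
  apply: contra_notP no_max => no_above; exists t; split=> // y Ey.
  by rewrite leNgt; apply/negP => t_lt_y; apply: no_above; exists y.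
pose n := Num.bound (`|t - a| + (y0 - t)^-1).
have n_gt : `|t - a| + (y0 - t)^-1 < n%:R.
  by apply: archi_boundP; rewrite addr_ge0 // invr_ge0 subr_ge0 ltW.
have t_lt_an : t < a + n%:R.
  have : t - a <= `|t - a| by apply: ler_norm.
  have : 0 <= (y0 - t)^-1 by rewrite invr_ge0 subr_ge0 ltW.
  lra.
have inv_lt : (n.+1%:R : R)^-1 < y0 - t.
  rewrite invf_plt ?posrE ?ltr0n ?subr_gt0 //.
  apply: (le_lt_trans _ (lt_trans n_gt _)); first by rewrite lerDr.
  by rewrite ltr_nat.
have t_lt_z : t < z n.
  case: (z_spec n) => _ [an_le_z|near_sup]; first exact: lt_le_trans an_le_z.
  move: (near_sup y0 Ey0) inv_lt; set e := (n.+1%:R)^-1; lra.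
exists n, (r n - t); first by rewrite subr_gt0 (lt_le_trans t_lt_z).
by move=> y _; rewrite addrC subrK => /ltW.
Qed.

Lemma compact_exhaustion E a : E a -> exists l r : nat -> R,
  [/\ forall n, E (l n) /\ E (r n), forall n, l n <= a <= r n,
      {homo l : i j / (i <= j)%N >-> j <= i}, {homo r : i j / (i <= j)%N >-> i <= j} &
   forall t, E t -> exists n, exists2 d, 0 < d &
     forall y, E y -> `|y - t| < d -> l n <= y <= r n].
Proof.
move=> Ea.
have [r [Er a_le_r r_homo r_cover]] := exhaust_right Ea.
have Ea' : [set x | E (- x)] (- a) by rewrite /= opprK.
have [r' [Er' a_le_r' r'_homo r'_cover]] := exhaust_right Ea'.
exists (fun n => - r' n), r; split=> //.
- by move=> n; split=> //; apply: Er'.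
- by move=> n; rewrite a_le_r andbT lerNl; apply: a_le_r'.
- by move=> i j ij; rewrite lerN2; apply: r'_homo.
move=> t Et.
have [n1 [d1 d1_gt0 cover1]] := r_cover t Et.
have Et' : [set x | E (- x)] (- t) by rewrite /= opprK.
have [n2 [d2 d2_gt0 cover2]] := r'_cover (- t) Et'.
exists (maxn n1 n2), (Num.min d1 d2); first by rewrite lt_min d1_gt0 d2_gt0.
move=> y Ey; rewrite lt_min !ltr_norml => /andP[/andP[_ yt_lt_d1] /andP[yt_gt_d2 _]].
have y_le : y <= r n1 by apply: cover1 => //; lra.
have y_ge : - y <= r' n2 by apply: cover2; rewrite /= ?opprK //; lra.
have := r_homo _ _ (leq_maxl n1 n2); have := r'_homo _ _ (leq_maxr n1 n2).
by move=> ? ?; apply/andP; split; lra.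
Qed.

End Exhaustion.

Lemma nat_dependent_choice (X : Type) (P : nat -> X -> Prop) (Q : nat -> X -> X -> Prop) :
  (exists x, P 0%N x) -> (forall n x, P n x -> exists y, P n.+1 y /\ Q n x y) ->
  exists u : nat -> X, forall n, P n (u n) /\ Q n (u n) (u n.+1).
Proof.
move=> P0 PS.
pose g := fix g n : {x | P n x} := if n is k.+1 then
  let: exist x Px := g k in
  exist _ (proj1_sig (cid (PS k x Px))) (proj1 (proj2_sig (cid (PS k x Px))))
  else cid P0.
exists (fun n => proj1_sig (g n)) => n; split; first exact: proj2_sig (g n).
rewrite [g n.+1]/=; case: (g n) => x Px /=.
exact: proj2 (proj2_sig (cid (PS n x Px))).
Qed.

Section Patching.
Variables (R : realType) (p q : nat).

Definition segment (x y : R) : set R := [set t | x <= t <= y].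

Lemma segment_closed x y : closed (segment x y).
Proof.
have -> : segment x y = [set t | x <= t] `&` [set t | t <= y].
  by rewrite predeqE => t; rewrite /segment /=; split => [/andP[]|[-> ->]].
by apply: closedI; [apply: closed_ge | apply: closed_le].
Qed.

Variables (l r : nat -> R) (u : nat -> R -> 'M[R]_(p, q)).
Hypothesis l_homo : {homo l : i j / (i <= j)%N >-> j <= i}.
Hypothesis r_homo : {homo r : i j / (i <= j)%N >-> i <= j}.
Hypothesis u_step : forall n t, l n <= t <= r n -> u n.+1 t = u n t.

Lemma coherent_patches n k t : l n <= t <= r n -> l k <= t <= r k -> u k t = u n t.
Proof.
have up n' j : l n' <= t <= r n' -> u (j + n') t = u n' t.
  move=> /andP[lt tr]; elim: j => [//|j IHj]; rewrite addSn -IHj u_step //.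
  by rewrite (le_trans (l_homo (leq_addl j n')) lt) (le_trans tr (r_homo (leq_addl j n'))).
move=> tn tk; rewrite -(@up k (maxn n k - k)%N tk) subnK ?leq_maxr //.
by rewrite -(subnK (leq_maxl n k)) up.
Qed.

Lemma patch_continuous (E : set R) :
  (forall n, mxcontinuous (segment (l n) (r n)) (u n)) ->
  (forall t, E t -> exists n, exists2 d, 0 < d &
     forall y, E y -> `|y - t| < d -> l n <= y <= r n) ->
  exists S, mxcontinuous E S /\ forall n t, E t -> l n <= t <= r n -> S t = u n t.
Proof.
move=> u_cont cover.
have N_ex t : exists n, E t -> exists2 d, 0 < d &
     forall y, E y -> `|y - t| < d -> l n <= y <= r n.
  have [Et|nEt] := pselect (E t); last by exists 0%N.
  by have [n hn] := cover t Et; exists n.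
have [N hN] := choice N_ex.
have N_in t : E t -> l (N t) <= t <= r (N t).
  by move=> Et; have [d d_gt0 hd] := hN t Et; apply: hd => //; rewrite subrr normr0.
pose S t := u (N t) t.
have S_eq n t : E t -> l n <= t <= r n -> S t = u n t.
  by move=> Et tn; apply: coherent_patches => //; apply: N_in.
exists S; split=> // i j; apply/subspace_continuousP => x Ex.
have [d d_gt0 hd] := hN x Ex; set n := N x in hd.
have x_in : l n <= x <= r n by apply: hd => //; rewrite subrr normr0.
have u_cvg := (proj1 (subspace_continuousP _ _) (u_cont n i j)) x x_in.
rewrite /from_subspace (S_eq n x Ex x_in) => B hB.
have u_near : \forall t \near x, segment (l n) (r n) t -> B (u n t i j) := u_cvg B hB.
suff : \forall t \near x, E t -> B (S t i j) by [].
have x_ball : \forall y \near x, ball x d y by apply: near_ball.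
apply: filterS2 u_near x_ball => y u_y y_ball Ey.
have yx_lt : `|y - x| < d by move: y_ball; rewrite /ball /= distrC.
by rewrite /= (S_eq n y Ey (hd y Ey yx_lt)); apply: u_y; apply: hd.
Qed.

End Patching.

Section LocalToGlobal.
Variables (R : realType) (p q : nat) (good : R -> 'M[R]_(p, q) -> Prop) (E : set R).
Hypothesis E_interval : is_interval E.
Hypothesis good_gauge : forall t (A B : 'M[R]_(p, q)), E t -> good t A -> good t B ->
  exists K : 'M[R]_p, K *m B = A /\ forall u Z, E u -> good u Z -> good u (K *m Z).
Hypothesis good_local : forall t0, E t0 -> exists2 d, 0 < d &
  exists f, mxcontinuous E f /\ forall t, E t -> `|t - t0| < d -> good t (f t).

Definition good_on x y f :=
  mxcontinuous (segment x y) f /\ forall t, x <= t <= y -> good t (f t).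

Lemma segment_subset x y : E x -> E y -> segment x y `<=` E.
Proof. by move=> Ex Ey t /andP[xt ty]; apply: (E_interval Ex Ey); rewrite xt ty. Qed.

Lemma good_on_glue x c y f g : x <= c -> c <= y -> good_on x c f -> good_on c y g ->
  f c = g c -> good_on x y (fun t => if t <= c then f t else g t).
Proof.
move=> xc cy [f_cont f_good] [g_cont g_good] fgc; split; last first.
  move=> t /andP[xt ty]; case: ifPn => tc; first by apply: f_good; rewrite xt tc.
  by apply: g_good; rewrite ty andbT ltW // ltNge.
have -> : segment x y = segment x c `|` segment c y.
  rewrite predeqE => t; rewrite /segment /=; split.
    by move=> /andP[xt ty]; case: (leP t c) => tc; [left|right]; rewrite ?xt ?ty ?tc // ltW.
  by case=> /andP[h1 h2]; rewrite ?(le_trans xc h1) ?(le_trans h2 cy) ?h1 ?h2.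
move=> i j; apply: withinU_continuous; try exact: segment_closed.
  by apply: (eq_within_continuous (f := fun t => f t i j)) (f_cont i j) => t /= /andP[_ ->].
apply: (eq_within_continuous (f := fun t => g t i j)) (g_cont i j) => t /= /andP[ct ty].
case: ifPn => // tc; have -> : t = c by apply/eqP; rewrite eq_le tc ct.
by rewrite fgc.
Qed.

Lemma good_on_mul x y f (K : 'M[R]_p) : E x -> E y ->
  (forall u Z, E u -> good u Z -> good u (K *m Z)) -> good_on x y f ->
  good_on x y (fun t => K *m f t).
Proof.
move=> Ex Ey K_good [f_cont f_good]; split.
  by apply: mxcontinuous_mul => //; apply: mxcontinuous_cst.
by move=> t xty; apply: K_good; [apply: (segment_subset Ex Ey) | apply: f_good].
Qed.

Lemma good_on_local t0 : E t0 -> exists2 d, 0 < d & exists f,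
  forall x y, E x -> E y -> t0 - d < x -> y < t0 + d -> good_on x y f.
Proof.
move=> Et0; have [d d_gt0 [f [f_cont f_good]]] := good_local Et0.
exists d => //; exists f => x y Ex Ey xd yd; split.
  exact: mxcontinuousW (segment_subset Ex Ey) f_cont.
move=> t /andP[xt ty]; apply: f_good.
  by apply: (segment_subset Ex Ey); rewrite /segment /= xt ty.
by rewrite ltr_norml; apply/andP; split; lra.
Qed.

Lemma good_on_join x c y f g : E x -> E y -> x <= c -> c <= y ->
  good_on x c f -> good_on c y g ->
  exists h, good_on x y h /\ forall t, x <= t <= c -> h t = f t.
Proof.
move=> Ex Ey xc cy f_on g_on.
have Ec : E c by apply: (E_interval Ex Ey); rewrite xc cy.
have [K [Kg K_good]] := good_gauge Ec (f_on.2 c ltac:(by rewrite xc lexx))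
  (g_on.2 c ltac:(by rewrite cy lexx)).
exists (fun t => if t <= c then f t else K *m g t); split; last by move=> t /andP[_ ->].
by apply: good_on_glue => //; apply: good_on_mul.
Qed.

Lemma good_on_segment x y : E x -> E y -> x <= y -> exists f, good_on x y f.
Proof.
move=> Ex Ey xy.
pose S := [set z | x <= z <= y /\ exists f, good_on x z f].
have Sx : S x.
  split; first by rewrite lexx xy.
  have [d d_gt0 [f f_on]] := good_on_local Ex.
  by exists f; apply: f_on => //; lra.
have supS : has_sup S by split; [exists x | exists y => z [/andP[_ ->]]].
set c := sup S.
have xc : x <= c by apply: sup_upper_bound.
have cy : c <= y by apply: ge_sup; [exists x | move=> z [/andP[_ ->]]].
have Ec : E c by apply: (E_interval Ex Ey); rewrite xc cy.
have [d d_gt0 [g g_on]] := good_on_local Ec.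
have [z [/andP[xz zy] [f f_on]] near_c] := sup_adherent d_gt0 supS.
have zc : z <= c by apply: sup_upper_bound => //; split; [rewrite xz zy | exists f].
have Ez : E z by apply: (E_interval Ex Ey); rewrite xz zy.
have [y_near|y_far] := ltP y (c + d).
  have [h [h_on _]] := good_on_join Ex Ey xz zy f_on (g_on z y Ez Ey near_c y_near).
  by exists h.
(* Otherwise there is a good function on [x, c + d/2], contradicting c = sup S. *)
set w := c + d / 2.
have Ew : E w by apply: (E_interval Ex Ey); rewrite /w; apply/andP; split; lra.
have zw : z <= w by rewrite /w; lra.
have w_near : w < c + d by rewrite /w; lra.
have [h [h_on _]] := good_on_join Ex Ew xz zw f_on (g_on z w Ez Ew near_c w_near).
have : w <= c.
  by apply: sup_upper_bound => //; split; [rewrite /w; apply/andP; split; lra | exists h].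
by rewrite /w; lra.
Qed.

Lemma good_on_extend x' x y y' f : E x' -> E y' -> x' <= x -> x <= y -> y <= y' ->
  good_on x y f -> exists h, good_on x' y' h /\ forall t, x <= t <= y -> h t = f t.
Proof.
move=> Ex' Ey' x'x xy yy' f_on.
have Ex : E x by apply: (E_interval Ex' Ey'); rewrite x'x (le_trans xy yy').
have Ey : E y by apply: (E_interval Ex' Ey'); rewrite yy' (le_trans x'x xy).
have [g g_on] := good_on_segment Ey Ey' yy'.
have [h1 [h1_on h1f]] := good_on_join Ex Ey' xy yy' f_on g_on.
have [g' g'_on] := good_on_segment Ex' Ex x'x.
have [K [Kg K_good]] := good_gauge Ex (h1_on.2 x ltac:(by rewrite lexx (le_trans xy yy')))
  (g'_on.2 x ltac:(by rewrite x'x lexx)).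
exists (fun t => if t <= x then K *m g' t else h1 t); split.
  apply: good_on_glue => //; first exact: le_trans yy'.
  exact: good_on_mul.
move=> t /andP[xt ty]; case: ifPn => tx; last by rewrite h1f // ty andbT.
have -> : t = x by apply/eqP; rewrite eq_le tx xt.
by rewrite Kg h1f // lexx.
Qed.

Lemma global_good : exists f, mxcontinuous E f /\ forall t, E t -> good t (f t).
Proof.
have [[a Ea]|E0] := pselect (exists a, E a); last first.
  exists (fun _ => 0); split; last by move=> t Et; exfalso; apply: E0; exists t.
  by move=> i j; apply/subspace_continuousP => x Ex; exfalso; apply: E0; exists x.
have [l [r [Elr l_le_a_le_r l_homo r_homo cover]]] := compact_exhaustion Ea.
have l_le_r n : l n <= r n by have /andP[la ar] := l_le_a_le_r n; apply: le_trans la ar.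
have [u hu] : exists u : nat -> R -> 'M[R]_(p, q), forall n,
    good_on (l n) (r n) (u n) /\ forall t, l n <= t <= r n -> u n.+1 t = u n t.
  apply: (nat_dependent_choice (P := fun n f => good_on (l n) (r n) f)
    (Q := fun n f g => forall t, l n <= t <= r n -> g t = f t)).
    by case: (Elr 0%N) => El Er; apply: good_on_segment.
  move=> n f f_on; case: (Elr n.+1) => El Er.
  exact: good_on_extend El Er (l_homo _ _ (leqnSn n)) (l_le_r n) (r_homo _ _ (leqnSn n)) f_on.
have [S [S_cont S_eq]] := patch_continuous l_homo r_homo (fun n => (hu n).2)
  (fun n => (hu n).1.1) cover.
exists S; split=> // t Et.
have [n [d d_gt0 hd]] := cover t Et.
have t_in : l n <= t <= r n by apply: hd => //; rewrite subrr normr0.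
by rewrite (S_eq n t Et t_in); apply: (hu n).1.2.
Qed.

End LocalToGlobal.

Section ContinuousRowBasis.
Variable R : realType.

Lemma rv_mul_tr_eq0 n (y : 'rV[R]_n) : y *m y^T = 0 -> y = 0.
Proof.
move=> /matrixP /(_ 0 0); rewrite !mxE => /eqP.
rewrite psumr_eq0 => [/allP y0|j _]; last by rewrite mxE -expr2 sqr_ge0.
apply/matrixP => i j; rewrite ord1 mxE.
by have /(_ (mem_index_enum j)) := y0 j; rewrite /= mxE mulf_eq0 orbb => /eqP.
Qed.

Lemma gram_unitmxE k n (N : 'M[R]_(k, n)) : (N *m N^T \in unitmx) = row_free N.
Proof.
apply/idP/idP => [|N_free].
  rewrite -row_free_unit /row_free => /eqP rank_gram.
  by apply/eqP/anti_leq; rewrite rank_leq_row /= -[X in (X <= _)%N]rank_gram mxrankM_maxl.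
rewrite -row_free_unit; apply: inj_row_free => x x_gram.
have : (x *m N) *m (x *m N)^T = 0 by rewrite trmx_mul !mulmxA -(mulmxA x) x_gram mul0mx.
by move=> /rv_mul_tr_eq0 xN0; apply: (row_free_inj N_free); rewrite xN0 mul0mx.
Qed.

Variables (E : set R) (E_interval : is_interval E).

(* Locally, the rows selected by a row basis at [t0] stay independent nearby (their
   Gram determinant is continuous); the local frames are then patched along the
   interval, any two frames of the same space differing by an invertible factor. *)
Theorem continuous_row_basis p n k (Q : R -> 'M[R]_(p, n)) :
  mxcontinuous E Q -> (forall t, E t -> \rank (Q t) = k) ->
  exists N : R -> 'M[R]_(k, n), mxcontinuous E N /\
    forall t, E t -> (N t == Q t)%MS /\ row_free (N t).
Proof.
move=> Q_cont Q_rank.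
have [N [N_cont N_basis]] : exists N : R -> 'M[R]_(k, n), mxcontinuous E N /\
    forall t, E t -> (N t == Q t)%MS /\ N t *m (N t)^T \in unitmx.
  apply: (global_good (good := fun t N => (N == Q t)%MS /\ N *m N^T \in unitmx) E_interval).
    move=> t A B Et [AQ A_gram] [BQ B_gram].
    have /eqmxMunitP [K K_unit AKB] : (A == B)%MS.
      by apply/eqmxP; apply: eqmx_trans (eqmxP AQ) (eqmx_sym (eqmxP BQ)).
    exists K; split=> [|u Z Eu [ZQ Z_gram]]; first by rewrite AKB.
    split.
      by apply/eqmxP; apply: eqmx_trans (eqmxP ZQ); apply/eqmxP/eqmxMunitP; exists K.
    by rewrite trmx_mul !mulmxA -(mulmxA K) !unitmx_mul unitmx_tr K_unit Z_gram.
  move=> t0 Et0; have rank_t0 := Q_rank t0 Et0; subst k.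
  have /submxP [Psi basis_t0] : (row_base (Q t0) <= Q t0)%MS by rewrite eq_row_base.
  pose f t := Psi *m Q t.
  have f_cont : mxcontinuous E f by apply: mxcontinuous_mul => //; apply: mxcontinuous_cst.
  have gram_cont : {within E, continuous (fun t => \det (f t *m (f t)^T))}.
    exact: within_continuous_det (mxcontinuous_gram f_cont).
  have gram_t0 : \det (f t0 *m (f t0)^T) != 0.
    by rewrite -unitfE -unitmxE /f -basis_t0 gram_unitmxE row_base_free.
  have [d d_gt0 gram_near] := within_continuous_neq0 gram_cont Et0 gram_t0.
  exists d => //; exists f; split=> // t Et tt0.
  have f_gram : f t *m (f t)^T \in unitmx by rewrite unitmxE unitfE gram_near.
  split=> //; have [_ <-] := mxrank_leqif_eq (submxMl Psi (Q t)).
  by move: f_gram; rewrite gram_unitmxE => /eqP ->; rewrite Q_rank.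
exists N; split=> // t Et; have [NQ N_gram] := N_basis t Et.
by rewrite -gram_unitmxE.
Qed.

Lemma continuous_left_solution p q k (M : R -> 'M[R]_(p, q)) (P : 'M[R]_(k, q)) r :
  mxcontinuous E M -> (forall t, E t -> \rank (M t) = r) ->
  (forall t, E t -> (P <= M t)%MS) ->
  exists T : R -> 'M[R]_(k, p), mxcontinuous E T /\ forall t, E t -> T t *m M t = P.
Proof.
move=> M_cont M_rank PM.
have [N [N_cont N_basis]] := continuous_row_basis (mxcontinuous_tr M_cont)
  (fun t Et => etrans (mxrank_tr _) (M_rank t Et)).
pose G t := N t *m (N t)^T.
have G_unit t : E t -> G t \in unitmx by move=> /N_basis [_]; rewrite gram_unitmxE.
pose Y t := invmx (G t) *m N t *m M t.
(* [M = N^T Y] is a full-rank factorization and [Y^T (Y Y^T)^-1] a right inverse of [Y]. *)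
have M_fact t : E t -> M t = (N t)^T *m Y t.
  move=> Et; have /submxP [A MA] : ((M t)^T <= N t)%MS by rewrite (eqmxP (N_basis t Et).1).
  have -> : M t = (N t)^T *m A^T by rewrite -trmx_mul -MA trmxK.
  rewrite /Y /G -[M t]trmxK MA trmx_mul (mulmxA (_ *m N t)) -(mulmxA (invmx _)).
  by rewrite mulVmx ?mul1mx // G_unit.
have Y_gram t : E t -> Y t *m (Y t)^T \in unitmx.
  move=> Et; rewrite gram_unitmxE /row_free; apply/eqP/anti_leq; rewrite rank_leq_row /=.
  by rewrite -{1}(M_rank t Et) (M_fact t Et) mxrankM_maxr.
pose T t := P *m (Y t)^T *m invmx (Y t *m (Y t)^T) *m invmx (G t) *m N t.
have G_inv_cont : mxcontinuous E (fun t => invmx (G t)).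
  exact: mxcontinuous_inv (mxcontinuous_gram N_cont) G_unit.
have Y_cont : mxcontinuous E Y.
  exact: mxcontinuous_mul (mxcontinuous_mul G_inv_cont N_cont) M_cont.
exists T; split.
  apply: mxcontinuous_mul => //; apply: mxcontinuous_mul => //.
  apply: mxcontinuous_mul; last exact: mxcontinuous_inv (mxcontinuous_gram Y_cont) Y_gram.
  by apply: mxcontinuous_mul; [apply: mxcontinuous_cst | apply: mxcontinuous_tr].
move=> t Et; have /submxP [W PW] : (P <= Y t)%MS.
  by apply: submx_trans (PM t Et) _; rewrite (M_fact t Et) submxMl.
have -> : T t *m M t = P *m (Y t)^T *m invmx (Y t *m (Y t)^T) *m Y t by rewrite /T /Y !mulmxA.
by rewrite {1}PW -!(mulmxA W) (mulmxV (Y_gram t Et)) mul1mx -PW.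
Qed.

Lemma continuous_complement m k (C : R -> 'M[R]_(m + k, m)) (T1 : R -> 'M[R]_(m, m + k)) :
  mxcontinuous E C -> mxcontinuous E T1 -> (forall t, E t -> T1 t *m C t = 1%:M) ->
  exists N : R -> 'M[R]_(k, m + k), mxcontinuous E N /\
    forall t, E t -> N t *m C t = 0 /\ col_mx (T1 t) (N t) \in unitmx.
Proof.
move=> C_cont T1_cont T1C.
pose Q t := 1%:M - C t *m T1 t.
have QC t : E t -> Q t *m C t = 0.
  by move=> Et; rewrite /Q mulmxBl mul1mx -mulmxA T1C // mulmx1 subrr.
have Q_rank t : E t -> \rank (Q t) = k.
  move=> Et; have Q_ker : (Q t == kermx (C t))%MS.
    apply/andP; split; first by rewrite sub_kermx QC.
    have -> : kermx (C t) = kermx (C t) *m Q t.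
      by rewrite /Q mulmxBr mulmx1 mulmxA mulmx_ker mul0mx subr0.
    exact: submxMl.
  have C_rank : \rank (C t) = m.
    apply/anti_leq; rewrite rank_leq_col /=.
    by rewrite -{1}(mxrank1 R m) -(T1C t Et) mxrankM_maxr.
  by rewrite (eqmx_rank Q_ker) mxrank_ker C_rank addKn.
have Q_cont : mxcontinuous E Q.
  apply: mxcontinuous_add; first exact: mxcontinuous_cst.
  by apply: mxcontinuous_opp; apply: mxcontinuous_mul.
have [N [N_cont N_basis]] := continuous_row_basis Q_cont Q_rank.
exists N; split=> // t Et; have [NQ N_free] := N_basis t Et.
have NC : N t *m C t = 0.
  have /submxP [D ->] : (N t <= Q t)%MS by rewrite (eqmxP NQ).
  by rewrite -mulmxA QC // mulmx0.
split=> //; rewrite -row_free_unit; apply: inj_row_free => x.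
rewrite -(hsubmxK x) mul_row_col => x_ker.
have x1 : lsubmx x = 0.
  have := congr1 (mulmx^~ (C t)) x_ker; rewrite /= mul0mx mulmxDl -!mulmxA T1C // NC.
  by rewrite mulmx1 mulmx0 addr0.
move: x_ker; rewrite x1 mul0mx add0r => x_ker.
by rewrite (row_free_inj N_free (etrans x_ker (esym (mul0mx _ _)))) row_mx0.
Qed.

End ContinuousRowBasis.

Section FirstBlock.
Variables (R : realType) (m k : nat).
Local Notation first_block := (row_mx (1%:M : 'M[R]_m) (0 : 'M[R]_(m, k))).

Lemma mul_first_block (x : 'cV[R]_(m + k)) : first_block *m x = usubmx x.
Proof. by rewrite -{1}(vsubmxK x) mul_row_col mul1mx mul0mx addr0. Qed.

Lemma first_block_mul_tr : first_block *m first_block^T = 1%:M.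
Proof. by rewrite tr_row_mx mul_row_col trmx1 mulmx1 trmx0 mulmx0 addr0. Qed.

Lemma lsubmx_first_block p (A : 'M[R]_(p, m + k)) : lsubmx A = A *m first_block^T.
Proof. by rewrite -{2}(hsubmxK A) tr_row_mx mul_row_col trmx1 mulmx1 trmx0 mulmx0 addr0. Qed.

Lemma mul_block_diag1 (H : 'M[R]_k) (x : 'cV[R]_(m + k)) :
  block_mx 1%:M 0 0 H *m x = col_mx (usubmx x) (H *m dsubmx x).
Proof. by rewrite -{1}(vsubmxK x) mul_block_col !mul1mx !mul0mx addr0 add0r. Qed.

Lemma mx_cols_eq0 p q (A : 'M[R]_(p, q)) :
  (forall j, A *m (delta_mx j 0 : 'cV[R]_q) = 0) -> A = 0.
Proof.
move=> A_cols; apply/matrixP => i j.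
by move/matrixP: (A_cols j) => /(_ i 0); rewrite -colE !mxE.
Qed.

Lemma first_block_sub p (A : 'M[R]_(p, m + k)) :
  (forall x : 'cV[R]_(m + k), A *m x = 0 -> usubmx x = 0) -> (first_block <= A)%MS.
Proof.
move=> A_ker; rewrite submxE; apply/eqP/mx_cols_eq0 => j.
by rewrite -mulmxA mul_first_block A_ker // mulmxA mulmx_coker mul0mx.
Qed.

Lemma rank_ker_block p p' (A : 'M[R]_(p, m + k)) (B : 'M[R]_(p', k)) :
  (forall x : 'cV[R]_(m + k), A *m x = 0 <-> usubmx x = 0 /\ B *m dsubmx x = 0) ->
  \rank A = (m + \rank B)%N.
Proof.
move=> A_ker.
have ker_eq : (kermx A^T == row_mx (0 : 'M[R]_(k, m)) (kermx B^T))%MS.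
  apply/andP; split.
    apply/row_subP => i; set u := row i (kermx A^T).
    have /A_ker [u1 u2] : A *m u^T = 0.
      by rewrite -[A]trmxK -trmx_mul /u -row_mul mulmx_ker row0 trmx0.
    have -> : u = row_mx (usubmx u^T)^T (dsubmx u^T)^T.
      by rewrite trmx_usub trmx_dsub trmxK hsubmxK.
    have /submxP [D ->] : ((dsubmx u^T)^T <= kermx B^T)%MS.
      by rewrite sub_kermx -trmx_mul u2 trmx0.
    by rewrite u1 trmx0 -[0 : 'M_(1, m)](mulmx0 _ D) -mul_mx_row submxMl.
  rewrite sub_kermx; apply/eqP/trmx_inj; rewrite trmx_mul trmxK trmx0.
  apply: mx_cols_eq0 => j; rewrite -mulmxA; apply/A_ker.
  rewrite tr_row_mx mul_col_mx col_mxKu col_mxKd trmx0 mul0mx; split=> //.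
  by rewrite mulmxA -{1}[B]trmxK -trmx_mul mulmx_ker trmx0 mul0mx.
move: (eqmx_rank ker_eq); rewrite rank_row_0mx !mxrank_ker !mxrank_tr.
by have := rank_leq_col A; have := rank_leq_col B; lia.
Qed.

End FirstBlock.

Section OneFull.
Variables (R : realType) (m s : nat).
Implicit Types (I : interval R) (M : R -> 'M[R]_(m + s * m)).

Lemma one_full_ker (A : 'M[R]_(m + s * m)) (x : 'cV[R]_(m + s * m)) :
  one_full A -> A *m x = 0 -> usubmx x = 0.
Proof.
case=> T [_ [H TA]] Ax0; move: (congr1 (mulmx T) Ax0).
by rewrite mulmxA TA mul_block_diag1 mulmx0 => /eqP; rewrite col_mx_eq0 => /andP[/eqP].
Qed.

Lemma smoothly_one_full_pointwise I M :
  smoothly_one_full I M -> forall t, t \in I -> one_full (M t).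
Proof.
case=> T [_ [T_unit [H TM]]] t tI.
by exists (T t); split; [apply: T_unit | exists (H t); apply: TM].
Qed.

Lemma ker_block_of_smoothly_one_full I M : mx_continuous_on I M ->
  smoothly_one_full I M -> const_rank I M ->
  exists H : R -> 'M[R]_(s * m), mx_continuous_on I H /\ const_rank I H /\
    forall t, t \in I -> forall x : 'cV[R]_(m + s * m),
      M t *m x = 0 <-> (usubmx x = 0 /\ H t *m dsubmx x = 0).
Proof.
move=> M_cont [T [T_cont [T_unit [H TM]]]] [r M_rank].
exists (fun t => drsubmx (T t *m M t)); split.
  exact: mxcontinuous_drsub (mxcontinuous_mul T_cont M_cont).
split.
  exists (r - m)%N => t tI.
  have : \rank (T t *m M t) = \rank (M t).
    by apply/eqmx_rank/eqmxP/eqmxMfull; rewrite row_full_unit T_unit.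
  by rewrite TM // rank_diag_block_mx mxrank1 block_mxKdr M_rank // => <-; rewrite addKn.
move=> t tI x; rewrite TM // block_mxKdr.
have TMx : T t *m (M t *m x) = col_mx (usubmx x) (H t *m dsubmx x).
  by rewrite mulmxA TM // mul_block_diag1.
split=> [Mx0|[x1 Hx2]].
  by move: TMx; rewrite Mx0 mulmx0 => /esym/eqP; rewrite col_mx_eq0 => /andP[/eqP ? /eqP].
by rewrite -(mulKmx (T_unit t tI) (M t *m x)) TMx x1 Hx2 col_mx0 mulmx0.
Qed.

Lemma const_rank_of_ker_block I M (H : R -> 'M[R]_(s * m)) : const_rank I H ->
  (forall t, t \in I -> forall x : 'cV[R]_(m + s * m),
     M t *m x = 0 <-> (usubmx x = 0 /\ H t *m dsubmx x = 0)) ->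
  const_rank I M.
Proof.
case=> r H_rank M_ker; exists (m + r)%N => t tI.
by rewrite (rank_ker_block (M_ker t tI)) H_rank.
Qed.

Lemma smoothly_one_full_of_ker I M : mx_continuous_on I M -> const_rank I M ->
  (forall t, t \in I -> forall x : 'cV[R]_(m + s * m), M t *m x = 0 -> usubmx x = 0) ->
  smoothly_one_full I M.
Proof.
move=> M_cont [r M_rank] M_ker.
have I_interval : is_interval [set` I] := @interval_is_interval R I.
pose P := row_mx (1%:M : 'M[R]_m) (0 : 'M[R]_(m, s * m)).
have [T1 [T1_cont T1M]] := continuous_left_solution I_interval (P := P) M_cont M_rank
  (fun t tI => first_block_sub (M_ker t tI)).
pose C t := M t *m P^T.
have C_cont : mxcontinuous [set` I] C.
  by apply: mxcontinuous_mul => //; apply: mxcontinuous_cst.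
have T1C t : t \in I -> T1 t *m C t = 1%:M.
  by move=> tI; rewrite mulmxA T1M // first_block_mul_tr.
have [N [N_cont N_spec]] := continuous_complement I_interval C_cont T1_cont T1C.
exists (fun t => col_mx (T1 t) (N t)); split; first exact: mxcontinuous_col.
split=> [t /N_spec [] //|]; exists (fun t => rsubmx (N t *m M t)) => t tI.
rewrite mul_col_mx T1M // block_mxEv; congr col_mx.
rewrite -{1}(hsubmxK (N t *m M t)) lsubmx_first_block -mulmxA.
by have [-> _] := N_spec t tI.
Qed.

End OneFull.

Unset Implicit Arguments.
Local Close Scope classical_set_scope.

Theorem lemmal (R : realType) (m s : nat) (I : interval R)
  (M : R -> 'M[R]_(m + s * m)) :
  mx_continuous_on I M ->
  let P1 := smoothly_one_full I M /\ const_rank I M in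
  let P2 := const_rank I M /\ (forall t, t \in I -> one_full (M t)) in
  let P3 := exists H : R -> 'M[R]_(s * m),
      mx_continuous_on I H /\ const_rank I H /\
      forall t, t \in I -> forall x : 'cV[R]_(m + s * m),
        M t *m x = 0 <-> (usubmx x = 0 /\ H t *m dsubmx x = 0) in
  let P4 := const_rank I M /\
      forall t, t \in I -> forall x : 'cV[R]_(m + s * m),
        M t *m x = 0 ->
        row_mx (1%:M : 'M[R]_m) (0 : 'M[R]_(m, s * m)) *m x = 0 in
  [/\ P1 <-> P2, P1 <-> P3 & P1 <-> P4].
Proof.
move=> M_cont P1 P2 P3 P4.
have p1p2 : P1 -> P2.
  by case=> M_full M_rank; split=> //; apply: smoothly_one_full_pointwise.
have p2p4 : P2 -> P4.
  case=> M_rank M_full; split=> // t tI x Mx0.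
  by rewrite mul_first_block (one_full_ker (M_full t tI) Mx0).
have p4p1 : P4 -> P1.
  case=> M_rank M_ker; split=> //; apply: smoothly_one_full_of_ker => // t tI x Mx0.
  by rewrite -mul_first_block (M_ker t tI x Mx0).
have p1p3 : P1 -> P3.
  by case=> M_full M_rank; apply: ker_block_of_smoothly_one_full.
have p3p4 : P3 -> P4.
  case=> H [_ [H_rank M_ker]]; split; first exact: const_rank_of_ker_block H_rank M_ker.
  by move=> t tI x /(M_ker t tI) [x1 _]; rewrite mul_first_block.
split; split.
- exact: p1p2.
- by move=> /p2p4 /p4p1.
- exact: p1p3.
- by move=> /p3p4 /p4p1.
- by move=> /p1p2 /p2p4.
- exact: p4p1.
Qed.
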